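(* Let $n,m,k$ be positive integers with $m\le n$. Let $W=(w_{ij})_{i,j=1}^m$ be a weighing matrix of order $m$ and weight $k$, and let $K_{i,j}$ ($i,j\in\{1,\ldots,m\}$) be $n\times n$ monomial $(0,1)$-matrices such that $\sum_{l=1}^mK_{i,l}K_{j,l}^\top$ is a $(0,1)$-matrix for all distinct $i,j$. For $i\in\{1,\ldots,m\}$ let $W_i$ be the $nm\times nm$ block matrix whose $(a,b)$-block is $w_{ab}K_{i,b}$ ($a,b\in\{1,\ldots,m\}$). Then (1) each $W_i$ is a weighing matrix of order $nm$ and weight $k$; (2) $W_1,\ldots,W_m$ are mutually quasi-unbiased weighing matrices for the parameters $(nm,k,k^2,1)$.
   Context: A weighing matrix of order $n$ and weight $k$ is an $n\times n$ $(0,1,-1)$-matrix $W$ with $WW^\top=kI_n$. A monomial $(0,1)$-matrix is a permutation matrix. Weighing matrices $W_1,W_2$ of order $n$ and weight $k$ are quasi-unbiased for parameters $(n,k,l,a)$ if $\frac1{\sqrt a}W_1W_2^\top$ is a weighing matrix of order $n$ and weight $l$; mutually quasi-unbiased means pairwise quasi-unbiased. *)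

From HB Require Import structures.
From mathcomp Require Import all_boot all_order all_algebra all_fingroup.
Set Implicit Arguments. Unset Strict Implicit. Unset Printing Implicit Defensive.
Import Order.TTheory GRing.Theory Num.Theory.
Local Open Scope ring_scope.

Definition weighing (R : rcfType) (N : nat) (A : 'M[R]_N) (k : nat) : Prop :=
  (forall i j, A i j \in [:: 0; 1; -1]) /\ A *m A^T = (k%:R)%:M.

Definition zero_one_mx (R : rcfType) (p q : nat) (A : 'M[R]_(p, q)) : Prop :=
  forall i j, A i j \in [:: 0; 1].

Definition quasi_unbiased (R : rcfType) (N : nat) (A B : 'M[R]_N)
    (k l a : nat) : Prop :=
  weighing A k /\ weighing B k /\
  weighing ((Num.sqrt (a%:R))^-1 *: (A *m B^T)) l.

(* The bijection 'I_(m*n) -> 'I_m * 'I_n : p = a*n + r  |->  (a, r)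
   (inverse of mathcomp's mxvec_index, row-major order). *)
Definition blk_idx (m n : nat) (p : 'I_(m * n)) : 'I_m * 'I_n :=
  enum_val (cast_ord (esym (mxvec_cast m n)) p).

Definition block_W (R : rcfType) (m n : nat) (W : 'M[R]_m)
    (K : 'I_m -> 'I_m -> 'M[R]_n) (i : 'I_m) : 'M[R]_(m * n) :=
  \matrix_(p, q)
    (W (blk_idx p).1 (blk_idx q).1 * K i (blk_idx q).1 (blk_idx p).2 (blk_idx q).2).

From HB Require Import structures.
From mathcomp Require Import all_boot all_order all_algebra all_fingroup.
From mathcomp Require Import ring lra.
Set Implicit Arguments. Unset Strict Implicit. Unset Printing Implicit Defensive.
Import Order.TTheory GRing.Theory Num.Theory.
Local Open Scope ring_scope.

(** The (a,c)-block of W_i W_j^T is sum_b w_ab w_cb K_ib K_jb^T.  For i = j each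
    K_ib K_ib^T is the identity, so the product is (W W^T) (x) I = k I.  For i <> j
    the entry at (r,s) of that block is sum_b w_ab w_cb x_b with x_b in {0,1} and
    sum_b x_b in {0,1}, so at most one term survives and the entry is 0 or +-1;
    moreover (W_i W_j^T)(W_i W_j^T)^T = W_i (W_j^T W_j) W_i^T = k^2 I. *)

Lemma blk_idx_bij (m n : nat) : bijective (@blk_idx m n).
Proof.
exists (fun x => cast_ord (mxvec_cast m n) (enum_rank x)) => [p|x].
  by rewrite /blk_idx enum_valK cast_ordKV.
by rewrite /blk_idx cast_ordK enum_rankK.
Qed.

Lemma blk_idx_eq (m n : nat) (p q : 'I_(m * n)) :
  (p == q) = ((blk_idx p).1 == (blk_idx q).1) && ((blk_idx p).2 == (blk_idx q).2).
Proof.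
rewrite -(inj_eq (bij_inj (blk_idx_bij m n))).
by case: (blk_idx p) (blk_idx q) => [a b] [c d].
Qed.

Lemma sum_blk_idx (V : nmodType) (m n : nat) (F : 'I_m -> 'I_n -> V) :
  \sum_(p < m * n) F (blk_idx p).1 (blk_idx p).2 = \sum_(a < m) \sum_(r < n) F a r.
Proof.
rewrite pair_big /= (reindex (@blk_idx m n)) //.
exact/onW_bij/blk_idx_bij.
Qed.

Lemma mem_signsM (R : pzRingType) (x y : R) :
  x \in [:: 0; 1; -1] -> y \in [:: 0; 1; -1] -> x * y \in [:: 0; 1; -1].
Proof.
by rewrite !inE => /or3P[]/eqP-> /or3P[]/eqP->;
  rewrite ?mul0r ?mulr0 ?mulrNN ?mul1r ?mulr1 ?eqxx ?orbT.
Qed.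

Lemma perm_mx_entry01 (R : pzRingType) (n : nat) (A : 'M[R]_n) i j :
  is_perm_mx A -> A i j \in [:: 0; 1].
Proof.
case/is_perm_mxP => s ->; rewrite !mxE.
by case: (s i == j); rewrite !inE eqxx ?orbT.
Qed.

Lemma perm_mx_mul_tr (R : comPzRingType) (n : nat) (A : 'M[R]_n) :
  is_perm_mx A -> A *m A^T = 1%:M.
Proof.
by case/is_perm_mxP => s ->; rewrite tr_perm_mx -perm_mxM mulgV perm_mx1.
Qed.

(* At most one [x b] is nonzero, so the sum is one of the [c b] or 0. *)
Lemma sum_mulr_01_signs (R : realDomainType) (I : finType) (c x : I -> R) :
  (forall b, c b \in [:: 0; 1; -1]) -> (forall b, x b \in [:: 0; 1]) ->
  \sum_b x b \in [:: 0; 1] -> \sum_b c b * x b \in [:: 0; 1; -1].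
Proof.
move=> c_sign x01 sum01.
have x_ge0 b : 0 <= x b by move: (x01 b); rewrite !inE => /orP[]/eqP->.
case: (pickP (fun b => x b == 1)) => [b0 /eqP xb0 | no_one]; last first.
  rewrite big1 ?inE ?eqxx // => b _.
  by move: (x01 b) (no_one b); rewrite !inE /= => /orP[]/eqP->; rewrite ?eqxx ?mulr0.
have rest0 : \sum_(b | b != b0) x b = 0.
  have rest_ge0 : 0 <= \sum_(b | b != b0) x b by exact: sumr_ge0.
  move: sum01; rewrite (bigD1 b0) //= xb0 !inE => /orP[]/eqP; lra.
have others0 := psumr_eq0P (fun b _ => x_ge0 b) rest0.
rewrite (bigD1 b0) //= big1 ?addr0 => [|b /others0->]; last by rewrite mulr0.
by rewrite xb0 mulr1.
Qed.

Lemma weighing_tr_mul (R : rcfType) (N k : nat) (A : 'M[R]_N) :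
  (0 < k)%N -> weighing A k -> A^T *m A = (k%:R)%:M.
Proof.
move=> k_gt0 [_ AAT]; have k_neq0 : (k%:R : R) != 0 by rewrite pnatr_eq0 -lt0n.
have inv_left : (k%:R^-1 *: A^T) *m A = 1%:M.
  by apply: mulmx1C; rewrite -scalemxAr AAT scale_scalar_mx mulVf.
by rewrite -scalemx1 -inv_left -scalemxAl scalerA divff // scale1r.
Qed.

Lemma weighing_mul_tr (R : rcfType) (N k : nat) (A B : 'M[R]_N) :
  (0 < k)%N -> weighing A k -> weighing B k ->
  (forall p q, (A *m B^T) p q \in [:: 0; 1; -1]) -> weighing (A *m B^T) (k ^ 2).
Proof.
move=> k_gt0 wA wB signs; split=> //.
rewrite trmx_mul trmxK mulmxA -(mulmxA A) (weighing_tr_mul k_gt0 wB).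
by rewrite mul_mx_scalar -scalemxAl wA.2 scale_scalar_mx natrX expr2.
Qed.

Section BlockMatrices.

Variables (R : rcfType) (m n : nat) (W : 'M[R]_m) (K : 'I_m -> 'I_m -> 'M[R]_n).

Lemma block_W_mul_trE i j p q :
  (block_W W K i *m (block_W W K j)^T) p q =
  \sum_(b < m) W (blk_idx p).1 b * W (blk_idx q).1 b *
      (K i b *m (K j b)^T) (blk_idx p).2 (blk_idx q).2.
Proof.
rewrite mxE; under eq_bigr do rewrite !mxE.
rewrite (sum_blk_idx (fun b t => W (blk_idx p).1 b * K i b (blk_idx p).2 t *
   (W (blk_idx q).1 b * K j b (blk_idx q).2 t))).
apply: eq_bigr => b _; rewrite mxE big_distrr /=.
by apply: eq_bigr => t _; rewrite !mxE; ring.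
Qed.

Variable k : nat.
Hypotheses (K_perm : forall i j, is_perm_mx (K i j)) (W_weighing : weighing W k).

Lemma block_W_weighing i : weighing (block_W W K i) k.
Proof.
have [W_signs WWT] := W_weighing; split.
  move=> p q; rewrite mxE; apply: mem_signsM => //.
  by move: (perm_mx_entry01 (blk_idx p).2 (blk_idx q).2 (K_perm i (blk_idx q).1));
    rewrite !inE => /orP[]->; rewrite ?orbT.
apply/matrixP => p q; rewrite block_W_mul_trE.
under eq_bigr do rewrite perm_mx_mul_tr //.
rewrite -big_distrl /=.
have -> : \sum_(b < m) W (blk_idx p).1 b * W (blk_idx q).1 b
    = (W *m W^T) (blk_idx p).1 (blk_idx q).1.
  by rewrite mxE; apply: eq_bigr => b _; rewrite mxE.
rewrite WWT !mxE blk_idx_eq.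
by case: (_ == _); case: (_ == _); rewrite ?mulr1n ?mulr0n ?mulr0 ?mul0r ?mulr1.
Qed.

Lemma block_W_cross_signs i j p q :
  zero_one_mx (\sum_(l < m) K i l *m (K j l)^T) ->
  (block_W W K i *m (block_W W K j)^T) p q \in [:: 0; 1; -1].
Proof.
move=> sum01; rewrite block_W_mul_trE.
apply: sum_mulr_01_signs => [b|b|].
- by apply: mem_signsM; apply: W_weighing.1.
- by apply: perm_mx_entry01; rewrite is_perm_mxMl // is_perm_mx_tr.
- by have := sum01 (blk_idx p).2 (blk_idx q).2; rewrite summxE.
Qed.

End BlockMatrices.

Theorem lemma4p6 (R : rcfType) (n m k : nat) (hn : (0 < n)%N) (hm : (0 < m)%N)
    (hk : (0 < k)%N) (hmn : (m <= n)%N)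
    (W : 'M[R]_m) (K : 'I_m -> 'I_m -> 'M[R]_n)
    (hW : weighing W k)
    (hK : forall i j, is_perm_mx (K i j))
    (hsum : forall i j : 'I_m, i != j ->
       zero_one_mx (\sum_(l < m) K i l *m (K j l)^T)) :
  (forall i : 'I_m, weighing (block_W W K i) k) /\
  (forall i j : 'I_m, i != j ->
     quasi_unbiased (block_W W K i) (block_W W K j) k (k ^ 2) 1).
Proof.
have W_i_weighing := block_W_weighing hK hW.
split=> // i j ij; do 2!split=> //.
rewrite sqrtr1 invr1 scale1r.
apply: weighing_mul_tr => // p q.
exact: (block_W_cross_signs hK hW p q (hsum i j ij)).
Qed.
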